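(* Let $k\ge 1$ be an integer and let $G$ be a finite abelian group with primary decomposition $G\cong\bigoplus_i (\mathbb{Z}_{p_i^{r_i}})^{d_i}$, where the pairs $(p_i,r_i)$ (with $p_i$ prime, $r_i\ge 1$) are pairwise distinct and $d_i\ge 1$ is the multiplicity of the cyclic summand $\mathbb{Z}_{p_i^{r_i}}$. Suppose that at least one of the following conditions holds: 1) for every $i$ with $p_i=2$ or $p_i=3$ we have $d_i\ge 2$ (no restriction on $d_i$ for $p_i>3$); 2) no $p_i$ equals $2$, and $k$ is even; 3) for every $i$ with $p_i=2$ we have $d_i\ge 2$, and $k$ is divisible by $4$; 4) for every $i$ with $p_i=2$ we have $d_i\ge 3$, and $k$ is even; 5) for every $i$ with $p_i=2$ we have $d_i\ge 2$ and $d_i\ne 3$, and $k$ is even with $k\ge 4$. Then the restricted wreath product $G\wr\mathbb{Z}^k$ admits an automorphism $\varphi$ with finite Reidemeister number $R(\varphi)<\infty$; that is, $G\wr\mathbb{Z}^k$ does not have the $R_\infty$ property.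
   Context: For a group $\Gamma$ and an automorphism $\varphi:\Gamma\to\Gamma$, the Reidemeister (twisted conjugacy) classes of $\varphi$ are the classes of the equivalence relation $x\sim gx\varphi(g^{-1})$ ($g\in\Gamma$), and the Reidemeister number $R(\varphi)$ is the number of these classes (possibly infinite). A group has the $R_\infty$ property if every automorphism of it has $R(\varphi)=\infty$. The restricted wreath product $G\wr\mathbb{Z}^k$ is the semidirect product $\Sigma\rtimes_\alpha\mathbb{Z}^k$, where $\Sigma=\bigoplus_{x\in\mathbb{Z}^k}G_x$ is the direct sum of copies $G_x\cong G$ and $\mathbb{Z}^k$ acts by shifting indices: $\alpha(x)(g_y)=g_{x+y}$. *)

From HB Require Import structures.
From mathcomp Require Import all_boot all_order all_algebra.
Set Implicit Arguments. Unset Strict Implicit. Unset Printing Implicit Defensive.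
Import GRing.Theory.
Local Open Scope ring_scope.

Fixpoint cyc_sum (ms : seq nat) : zmodType :=
  match ms with
  | [::] => 'I_1 : zmodType
  | m :: ms' => ('Z_m * cyc_sum ms')%type : zmodType
  end.

(* Primary-decomposition data: a list of triples (p, r, d), standing for the
   summand (Z_{p^r})^d.  The list of cyclic moduli, with multiplicity. *)
Definition pdec_moduli (s : seq (nat * nat * nat)) : seq nat :=
  flatten [seq nseq t.2 (t.1.1 ^ t.1.2)%N | t <- s].

Definition pdec_wf (s : seq (nat * nat * nat)) : Prop :=
  (forall p r d, (p, r, d) \in s -> [/\ prime p, (1 <= r)%N & (1 <= d)%N])
  /\ uniq [seq t.1 | t <- s].

Definition has_pdec (G : zmodType) (s : seq (nat * nat * nat)) : Prop :=
  exists h : G -> cyc_sum (pdec_moduli s),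
    (forall x y, h (x + y) = h x + h y) /\ bijective h.

Definition Zk (k : nat) := 'rV[int]_k.

Section Wreath.
Variables (G : zmodType) (k : nat).

(* Ambient carrier: pairs (f, x) with f : Z^k -> G (f y = component g_y)
   and x in Z^k; the wreath product consists of those with f finitely
   supported. *)
Definition wr := ((Zk k -> G) * Zk k)%type.

Definition fin_supp (f : Zk k -> G) : Prop :=
  exists s : seq (Zk k), forall z, z \notin s -> f z = 0.

Definition in_wr (w : wr) : Prop := fin_supp w.1.

(* Semidirect product law: alpha(x) shifts g_y to g_{x+y}, i.e.
   (alpha(x) f)(z) = f (z - x);  (f,x)(g,y) = (f + alpha(x) g, x + y). *)
Definition wr_mul (a b : wr) : wr :=
  ((fun z => a.1 z + b.1 (z - a.2)), a.2 + b.2).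

Definition wr_one : wr := ((fun _ => 0), 0).

Definition wr_inv (a : wr) : wr :=
  ((fun z => - a.1 (z + a.2)), - a.2).

Definition wr_automorphism (phi : wr -> wr) : Prop :=
  [/\ (forall a, in_wr a -> in_wr (phi a)),
      (forall a b, in_wr a -> in_wr b -> phi (wr_mul a b) = wr_mul (phi a) (phi b)),
      (forall a b, in_wr a -> in_wr b -> phi a = phi b -> a = b)
    & (forall b, in_wr b -> exists2 a, in_wr a & phi a = b)].

Definition twisted_conj (phi : wr -> wr) (x y : wr) : Prop :=
  exists2 g, in_wr g & y = wr_mul (wr_mul g x) (phi (wr_inv g)).

Definition finite_reidemeister (phi : wr -> wr) : Prop :=
  exists n (reps : 'I_n -> wr),
    (forall i, in_wr (reps i)) /\
    (forall x, in_wr x -> exists i, twisted_conj phi x (reps i)).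

End Wreath.

From HB Require Import structures.
From mathcomp Require Import all_boot all_order all_algebra.
From mathcomp Require Import zify.
From Stdlib Require Import FunctionalExtensionality.
Set Implicit Arguments. Unset Strict Implicit. Unset Printing Implicit Defensive.
Import GRing.Theory.
Local Open Scope ring_scope.

(* Take phi (f, x) = (psi \o f \o L^-1, L x), where L in GL_k(Z) satisfies
   1 + L + ... + L^(m-1) = 0 and psi is an automorphism of G such that psi^m
   has no nonzero fixed point.  Since (1 - L) (sum_(i<m) sum_(j<i) L^j) = m,
   every twisted class meets the elements (0, r) with r in the box [0, m)^k:
   moving the translation part there leaves the equation
   h - psi \o h \o sigma = g for an affine bijection sigma with sigma^m = 1,
   and h = sum_(j<m) psi^j \o (1 - psi^m)^-1 \o g \o sigma^j is a finitely
   supported solution.  So R(phi) <= m^k.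
   Block sums of companion matrices of 1 + X + ... + X^(n-1) provide L with
   m = 3 when k is even, m = 5 when 4 | k and m = 35 when k = 6 + 4j, and
   L = -1 gives m = 2.  The automorphism psi is built summand by summand:
   psi = -1 (m odd) or psi = 2 (m = 2) on Z_(p^r) when p is odd, resp. p > 3,
   and companion matrices of integer polynomials on (Z_(p^r))^d, d = 2..5,
   when p = 2 or 3; these are checked to be fixed-point free over F_p by
   enumeration, which lifts to Z_(p^r) through the p-torsion. *)

Lemma morphD_nmod_morphism (A B : zmodType) (f : A -> B) :
  {morph f : x y / x + y} -> nmod_morphism f.
Proof. by move=> fD; split=> //; apply: (addrI (f 0)); rewrite -fD !addr0. Qed.

Lemma raddf_ker0_inj (A B : zmodType) (f : {additive A -> B}) :
  (forall x, f x = 0 -> x = 0) -> injective f.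
Proof.
move=> ker0 x y fxy; apply/eqP; rewrite -subr_eq0; apply/eqP/ker0.
by rewrite raddfB fxy subrr.
Qed.

Section IterAdditive.
Variables (U : zmodType) (f : {additive U -> U}) (n : nat).

Fact iter_is_nmod_morphism : nmod_morphism (iter n f).
Proof. by split=> [|x y]; elim: n => //= j ->; rewrite ?raddf0 ?raddfD. Qed.

HB.instance Definition _ :=
  GRing.isNmodMorphism.Build U U (iter n f) iter_is_nmod_morphism.

End IterAdditive.

Lemma iter_can (T : Type) (f g : T -> T) :
  cancel f g -> forall n x, iter n g (iter n f x) = x.
Proof. by move=> fK; elim=> [|n IH] x //; rewrite (iterSr n g) /= fK IH. Qed.

Lemma addn_closed_lin (D : nat -> Prop) :
  (forall a b, D a -> D b -> D (a + b)%N) ->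
  forall a c j, D a -> D c -> D (a + j * c)%N.
Proof.
move=> DD a c j Da Dc; elim: j => [|j IH]; first by rewrite mul0n addn0.
by rewrite mulSn addnCA; apply: DD.
Qed.

(** * Geometric sums *)

Section GeometricSums.
Variable R : pzRingType.
Implicit Types (x : R) (m n t : nat).

Lemma geomsum_mul1B x n : (\sum_(i < n) x ^+ i) * (1 - x) = 1 - x ^+ n.
Proof.
elim: n => [|n IH]; first by rewrite big_ord0 mul0r expr0 subrr.
by rewrite big_ord_recr mulrDl IH mulrBr mulr1 -exprSr addrA subrK.
Qed.

Lemma geomsum2_mul1B x n :
  (\sum_(i < n) \sum_(j < i) x ^+ j) * (1 - x) = n%:R - \sum_(i < n) x ^+ i.
Proof.
rewrite mulr_suml; under eq_bigr do rewrite geomsum_mul1B.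
by rewrite sumrB sumr_const card_ord.
Qed.

Lemma geomsum_eq0_expr x m : \sum_(i < m) x ^+ i = 0 -> x ^+ m = 1.
Proof. by move=> sum0; apply/eqP; rewrite -subr_eq0 subrX1 sum0 mulr0. Qed.

Lemma geomsum_eq0_muln x m t :
  \sum_(i < m) x ^+ i = 0 -> \sum_(i < m * t) x ^+ i = 0.
Proof.
move=> sum0; elim: t => [|t IH]; first by rewrite muln0 big_ord0.
rewrite mulnS big_split_ord /= sum0 add0r.
under eq_bigr do rewrite exprD.
by rewrite -mulr_sumr IH mulr0.
Qed.

End GeometricSums.

Lemma iter_affine (R : pzRingType) k (A : 'M[R]_k) (c : 'rV[R]_k) j z :
  iter j (fun z => z *m A + c) z = z *m A ^+ j + c *m \sum_(i < j) A ^+ i.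
Proof.
elim: j => [|j IH] /=; first by rewrite expr0 mulmx1 big_ord0 mulmx0 addr0.
rewrite IH mulmxDl -!mulmxA -addrA big_ord_recl expr0 mulmxDr mulmx1 [c + _]addrC.
rewrite !mulmxE -exprSr mulr_suml.
by congr (_ + (c *m _ + c)); apply: eq_bigr => i _; rewrite -exprSr.
Qed.

Definition has_geomsum0_mx (R : pzRingType) m k :=
  exists M : 'M[R]_k, \sum_(i < m) M ^+ i = 0.

Lemma geomsum_block_diag (R : pzRingType) m a b (A : 'M[R]_a.+1) (B : 'M[R]_b.+1) :
  \sum_(i < m) A ^+ i = 0 -> \sum_(i < m) B ^+ i = 0 ->
  \sum_(i < m) block_mx A 0 0 B ^+ i = 0.
Proof.
move=> sumA sumB; under eq_bigr do rewrite exp_block_diag_mx.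
have -> : \sum_(i < m) block_mx (A ^+ i) 0 0 (B ^+ i) =
          block_mx (\sum_(i < m) A ^+ i) 0 0 (\sum_(i < m) B ^+ i).
  by elim/big_rec3: _ => [|i S X Y _ ->]; rewrite ?block_mx0 // add_block_mx !addr0.
by rewrite sumA sumB block_mx0.
Qed.

(* The companion matrix of 1 + X + ... + X^(n+1) is a root of it (Cayley-Hamilton). *)
Lemma has_geomsum0_mx_companion (R : comNzRingType) n : has_geomsum0_mx R n.+2 n.+1.
Proof.
pose P : {poly R} := \poly_(i < n.+2) 1.
have sizeP : size P = n.+2 by rewrite size_poly_eq ?oner_neq0.
have monP : P \is monic by rewrite monicE /lead_coef sizeP /P coef_poly ltnSn.
move: (companionmx P) (companionmxK monP); rewrite sizeP => M charM.
exists M; have := Cayley_Hamilton M; rewrite charM /P poly_def rmorph_sum /=.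
by under eq_bigr do rewrite scale1r rmorphXn /= horner_mx_X.
Qed.

Section GeomsumDimensions.
Variable R : pzRingType.

Lemma has_geomsum0_mx0 m : has_geomsum0_mx R m 0.
Proof. by exists 0; rewrite flatmx0. Qed.

Lemma has_geomsum0_mxD m a b :
  has_geomsum0_mx R m a -> has_geomsum0_mx R m b -> has_geomsum0_mx R m (a + b)%N.
Proof.
case: a => [|a] [A sumA] [B sumB]; first by exists B.
case: b B sumB => [|b] B sumB; first by rewrite addn0; exists A.
by exists (block_mx A 0 0 B); apply: geomsum_block_diag.
Qed.

Lemma has_geomsum0_mx_lin m a c j :
  has_geomsum0_mx R m a -> has_geomsum0_mx R m c -> has_geomsum0_mx R m (a + j * c)%N.
Proof. exact: (addn_closed_lin (@has_geomsum0_mxD m)). Qed.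

Lemma has_geomsum0_mx_muln m t k : has_geomsum0_mx R m k -> has_geomsum0_mx R (m * t)%N k.
Proof. by case=> M sumM0; exists M; apply: geomsum_eq0_muln. Qed.

Lemma has_geomsum0_mx2 k : has_geomsum0_mx R 2 k.
Proof. by exists (-1); rewrite big_ord_recr big_ord1 /= expr0 expr1 subrr. Qed.

End GeomsumDimensions.

Lemma has_geomsum0_mx3 (R : comNzRingType) k : ~~ odd k -> has_geomsum0_mx R 3 k.
Proof.
move=> k_even; have -> : k = (0 + k %/ 2 * 2)%N by lia.
exact: has_geomsum0_mx_lin (has_geomsum0_mx0 _ _) (has_geomsum0_mx_companion _ 1).
Qed.

Lemma has_geomsum0_mx5 (R : comNzRingType) k : (4 %| k)%N -> has_geomsum0_mx R 5 k.
Proof.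
move=> k_4; have -> : k = (0 + k %/ 4 * 4)%N by lia.
exact: has_geomsum0_mx_lin (has_geomsum0_mx0 _ _) (has_geomsum0_mx_companion _ 3).
Qed.

Lemma has_geomsum0_mx35 (R : comNzRingType) k :
  ~~ odd k -> ~~ (4 %| k)%N -> (4 <= k)%N -> has_geomsum0_mx R 35 k.
Proof.
move=> k_even k_4 k_ge4; have -> : k = (6 + (k - 6) %/ 4 * 4)%N by lia.
apply: has_geomsum0_mx_lin.
  exact: (has_geomsum0_mx_muln 5 (has_geomsum0_mx_companion _ 5)).
exact: (has_geomsum0_mx_muln 7 (has_geomsum0_mx_companion _ 3)).
Qed.

(** * Twisted conjugacy in the wreath product *)

Section TwistedCoboundary.
Variables (X : eqType) (G : zmodType) (psi : {additive G -> G}) (sig : X -> X).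
Variables (m : nat) (chi : G -> G).
Hypotheses (sig_m : forall z, iter m sig z = z)
  (chiK : forall y, chi y - iter m psi (chi y) = y) (chi0 : chi 0 = 0).

Definition coboundary (g : X -> G) (z : X) : G :=
  \sum_(j < m) iter j psi (chi (g (iter j sig z))).

Lemma coboundaryE g z : coboundary g z - psi (coboundary g (sig z)) = g z.
Proof.
pose a j := iter j psi (chi (g (iter j sig z))).
have -> : psi (coboundary g (sig z)) = \sum_(j < m) a j.+1.
  by rewrite raddf_sum; apply: eq_bigr => j _; rewrite /a [iter j.+1 sig z]iterSr.
rewrite -sumrB -(big_mkord xpredT (fun j => a j - a j.+1)).
under eq_bigr do rewrite -opprB.
by rewrite sumrN telescope_sumr // opprB /a sig_m chiK.
Qed.

Lemma coboundary_supp (g : X -> G) :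
  (exists s : seq X, forall z, z \notin s -> g z = 0) ->
  exists s : seq X, forall z, z \notin s -> coboundary g z = 0.
Proof.
case=> s gs; exists [seq iter i sig w | w <- s, i <- iota 0 m.+1] => z zs.
rewrite /coboundary big1 // => j _; rewrite gs ?chi0 ?raddf0 //.
apply: contra zs => jz; have jm : (j <= m)%N by apply: ltnW.
have -> : z = iter (m - j) sig (iter j sig z) by rewrite -iterD subnK.
by apply: allpairs_f; rewrite // mem_iota ltnS leq_subr.
Qed.

End TwistedCoboundary.

Lemma fin_supp_comp (G : zmodType) k (f : Zk k -> G) (u v : Zk k -> Zk k) (h : G -> G) :
  cancel u v -> h 0 = 0 -> fin_supp f -> fin_supp (fun z => h (f (u z))).
Proof.
move=> uK h0 [s fs]; exists (map v s) => z zs; rewrite fs ?h0 //.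
by apply: contra zs => uzs; rewrite -(uK z) map_f.
Qed.

Lemma rV_divz_eq k (m : nat) (x : 'rV[int]_k) :
  x = \row_j (x ord0 j %% m)%Z + (\row_j (x ord0 j %/ m)%Z) *+ m.
Proof.
apply/matrixP => i j; rewrite !mxE mulmxnE mxE (ord1 i).
by rewrite addrC -mulr_natr natz -divz_eq.
Qed.

Definition box_vec k m (F : {ffun 'I_k -> 'I_m}) : Zk k := \row_j (F j : nat)%:Z.

Section TwistedAutomorphism.
Variables (G : finZmodType) (k m : nat) (M : 'M[int]_k) (psi : G -> G).
Hypotheses (m_gt0 : (0 < m)%N) (sumM0 : \sum_(i < m) M ^+ i = 0)
  (psiD : {morph psi : x y / x + y}) (psi_ker : forall x, psi x = 0 -> x = 0)
  (psi_fpf : forall x, iter m psi x = x -> x = 0).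

HB.instance Definition _ := GRing.isNmodMorphism.Build G G psi (morphD_nmod_morphism psiD).

Let Minv := M ^+ m.-1.

Let mulmxMinv (z : Zk k) : z *m M *m Minv = z.
Proof. by rewrite -mulmxA mulmxE -exprS prednK // (geomsum_eq0_expr sumM0) mulmx1. Qed.

Let mulmxMinvM (z : Zk k) : z *m Minv *m M = z.
Proof. by rewrite -mulmxA mulmxE -exprSr prednK // (geomsum_eq0_expr sumM0) mulmx1. Qed.

Definition wr_twist (a : wr G k) : wr G k := (fun z => psi (a.1 (z *m Minv)), a.2 *m M).

Lemma wr_twist_automorphism : wr_automorphism wr_twist.
Proof.
have [psi' psiK psi'K] : bijective psi by apply/injF_bij/raddf_ker0_inj.
have psi'0 : psi' 0 = 0 by rewrite -{1}(raddf0 psi) psiK.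
split.
- case=> f x; apply: (fin_supp_comp (u := mulmx^~ Minv) (v := mulmx^~ M)) => //.
  exact: raddf0.
- case=> f x [g y] _ _; congr pair; last exact: mulmxDl.
  by apply: functional_extensionality => z /=; rewrite raddfD mulmxBl mulmxMinv.
- case=> f x [g y] _ _ [fg xy]; congr pair; last by rewrite -[x]mulmxMinv xy mulmxMinv.
  apply: functional_extensionality => z; apply: (raddf_ker0_inj psi_ker).
  by have := congr1 (fun F => F (z *m M)) fg; rewrite /= mulmxMinv.
- case=> g y gs; exists ((fun z => psi' (g (z *m M))), y *m Minv).
    exact: (fin_supp_comp (u := mulmx^~ M) (v := mulmx^~ Minv) mulmxMinv psi'0 gs).
  congr pair; last exact: mulmxMinvM.
  by apply: functional_extensionality => z /=; rewrite mulmxMinvM psi'K.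
Qed.

Lemma iter_affine_Minv (c : Zk k) z : iter m (fun z => z *m Minv + c) z = z.
Proof.
have tauK : cancel (fun z => z *m M - c *m M) (fun z => z *m Minv + c).
  by move=> y; rewrite mulmxBl !mulmxMinv subrK.
have tau_m : iter m (fun z => z *m M - c *m M) z = z.
  by rewrite iter_affine sumM0 mulmx0 addr0 (geomsum_eq0_expr sumM0) mulmx1.
by rewrite -{1}tau_m iter_can.
Qed.

Lemma translation_to_box (x : Zk k) :
  exists (t : Zk k) (F : {ffun 'I_k -> 'I_m}), t + x - t *m M = box_vec F.
Proof.
pose N := \sum_(i < m) \sum_(j < i) M ^+ j.
have NM : N * (1 - M) = m%:R by rewrite geomsum2_mul1B sumM0 subr0.
pose r : Zk k := \row_j (x ord0 j %% m)%Z; pose q : Zk k := \row_j (x ord0 j %/ m)%Z.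
have r_lt j : (`|r ord0 j| < m)%N.
  by rewrite -ltz_nat gez0_abs mxE ?modz_ge0 ?ltz_pmod // -lt0n.
exists (- (q *m N)), [ffun j => Ordinal (r_lt j)].
rewrite addrAC -{1}[- _]mulmx1 -mulmxBr mulNmx -mulmxA mulmxE NM raddfMn /= mulmx1.
rewrite (rV_divz_eq m x) -/r -/q (addrC r) addKr.
by apply/matrixP => i j; rewrite !mxE ffunE /= mxE gez0_abs ?modz_ge0 // -lt0n.
Qed.

Lemma wr_twist_finite_reidemeister : finite_reidemeister wr_twist.
Proof.
have [chi chiK1 chiK] : bijective (fun x : G => x - iter m psi x).
  apply/injF_bij/(raddf_ker0_inj (f := idfun \- iter m psi)) => x /eqP.
  by rewrite subr_eq0 => /eqP/esym/psi_fpf.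
have chi0 : chi 0 = 0 by rewrite -{1}(subrr (0 : G)) -{2}(raddf0 (iter m psi)) chiK1.
exists #|{ffun 'I_k -> 'I_m}|, (fun i => ((fun _ => 0), box_vec (enum_val i))).
split=> [i|[f x] fs]; first by exists [::].
have [t [F tF]] := translation_to_box x; exists (enum_rank F).
pose sig z := z *m Minv + (t - (t + x) *m Minv).
have sigE z : (z - (t + x)) *m Minv + t = sig z by rewrite mulmxBl addrAC -addrA.
have sig_m z : iter m sig z = z := iter_affine_Minv _ z.
pose g z := - f (z - t).
have gs : fin_supp g.
  exact: (fin_supp_comp (u := fun z => z - t) (v := fun z => z + t) (h := -%R)
                        (subrK t) (oppr0 _) fs).
pose psiA := GRing.Additive.clone G G psi _.
have [s hs] := coboundary_supp psiA sig_m chi0 gs.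
exists (coboundary psiA sig m chi g, t); first by exists s.
rewrite /wr_mul /wr_inv /wr_twist /= enum_rankK mulNmx tF; congr pair.
apply: functional_extensionality => z; rewrite sigE.
by rewrite [psi (- _)]raddfN addrAC (coboundaryE sig_m chiK) addNr.
Qed.

End TwistedAutomorphism.

(** * Automorphisms of finite abelian groups with fixed-point-free powers *)

Definition fpf_power_aut m (A : zmodType) :=
  exists psi : A -> A, [/\ {morph psi : x y / x + y}, (forall x, psi x = 0 -> x = 0)
                          & (forall x, iter m psi x = x -> x = 0)].

Section FpfClosure.
Variable m : nat.

Lemma fpf_power_aut_iso (A B : zmodType) (h : A -> B) :
  {morph h : x y / x + y} -> bijective h -> fpf_power_aut m B -> fpf_power_aut m A.
Proof.
move=> hD [h' hK h'K] [psi [psiD psi_ker psi_fpf]].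
have h'D : {morph h' : x y / x + y}.
  by move=> x y; apply: (can_inj hK); rewrite hD !h'K.
have [[h0 _] [h'0 _]] := (morphD_nmod_morphism hD, morphD_nmod_morphism h'D).
have iterE j x : iter j (h' \o psi \o h) x = h' (iter j psi (h x)).
  by elim: j => [|j /= ->]; rewrite /= ?hK ?h'K.
exists (h' \o psi \o h); split=> [x y | x | x] /=; first by rewrite hD psiD h'D.
  by move/(congr1 h); rewrite h'K h0 => /psi_ker/(congr1 h'); rewrite hK h'0.
by rewrite iterE => /(congr1 h); rewrite h'K => /psi_fpf/(congr1 h'); rewrite hK h'0.
Qed.

Lemma fpf_power_aut_prod (A B : zmodType) :
  fpf_power_aut m A -> fpf_power_aut m B -> fpf_power_aut m (A * B)%type.
Proof.
move=> [psi [psiD psi_ker psi_fpf]] [chi [chiD chi_ker chi_fpf]].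
have iterE j a b :
    iter j (fun x => (psi x.1, chi x.2)) (a, b) = (iter j psi a, iter j chi b).
  by elim: j => //= j ->.
exists (fun x => (psi x.1, chi x.2)); split=> [x y | [a b] | [a b]] /=.
- by rewrite psiD chiD.
- by case=> /psi_ker-> /chi_ker->.
- by rewrite iterE => -[/psi_fpf-> /chi_fpf->].
Qed.

Lemma fpf_power_aut_trivial : fpf_power_aut m ('I_1 : zmodType).
Proof. by exists id; split=> // x _; rewrite (ord1 x). Qed.

Lemma cyc_sum_cat (l1 l2 : seq nat) :
  exists h : cyc_sum (l1 ++ l2) -> (cyc_sum l1 * cyc_sum l2)%type,
    {morph h : x y / x + y} /\ bijective h.
Proof.
elim: l1 => [|a l1 [h [hD [h' hK h'K]]]] /=.
  exists (fun x => (0, x)); split; first by move=> x y; congr pair; rewrite /= ?addr0.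
  by exists snd => // -[u v]; rewrite (ord1 u).
exists (fun x => ((x.1, (h x.2).1), (h x.2).2)); split.
  by move=> [a1 x1] [a2 x2] /=; rewrite hD.
exists (fun y => (y.1.1, h' (y.1.2, y.2))) => [[a1 x1] | [[a1 u] v]] /=.
  by rewrite -surjective_pairing hK.
by rewrite h'K.
Qed.

Lemma fpf_power_aut_cat l1 l2 :
  fpf_power_aut m (cyc_sum l1) -> fpf_power_aut m (cyc_sum l2) ->
  fpf_power_aut m (cyc_sum (l1 ++ l2)).
Proof.
move=> fpf1 fpf2; have [h [hD hbij]] := cyc_sum_cat l1 l2.
exact: fpf_power_aut_iso hD hbij (fpf_power_aut_prod fpf1 fpf2).
Qed.

Lemma fpf_power_aut_nseq q a c j :
  fpf_power_aut m (cyc_sum (nseq a q)) -> fpf_power_aut m (cyc_sum (nseq c q)) ->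
  fpf_power_aut m (cyc_sum (nseq (a + j * c) q)).
Proof.
apply: (addn_closed_lin (D := fun d => fpf_power_aut m (cyc_sum (nseq d q)))) => a' b' fa fb.
by rewrite nseqD; apply: fpf_power_aut_cat.
Qed.

Lemma fpf_power_aut_pdec (G : zmodType) s :
  has_pdec G s ->
  (forall p r d, (p, r, d) \in s -> fpf_power_aut m (cyc_sum (nseq d (p ^ r)%N))) ->
  fpf_power_aut m G.
Proof.
move=> [h [hD hbij]] fpf_s; apply: (fpf_power_aut_iso hD hbij).
elim: s {h hD hbij} fpf_s => [|[[p r] d] s IH] fpf_s /=; first exact: fpf_power_aut_trivial.
rewrite /pdec_moduli /=; apply: fpf_power_aut_cat; first by apply: fpf_s; rewrite mem_head.
by apply: IH => p' r' d' t_s; apply: fpf_s; rewrite in_cons t_s orbT.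
Qed.

End FpfClosure.

Lemma fpf_power_aut_mulr (R : unitRingType) m (a : R) :
  a \is a GRing.unit -> a ^+ m - 1 \is a GRing.unit -> fpf_power_aut m R.
Proof.
move=> a_unit am1_unit; have iterE j x : iter j ( *%R^~ a) x = x * a ^+ j.
  by elim: j => [|j /= ->]; rewrite ?expr0 ?mulr1 // exprSr mulrA.
exists ( *%R^~ a); split=> [x y | x | x] /=; first exact: mulrDl.
  by move=> xa0; apply: (mulIr a_unit); rewrite /= xa0 mul0r.
rewrite iterE => /eqP; rewrite -subr_eq0 -{2}[x]mulr1 -mulrBr => /eqP xam0.
by apply: (mulIr am1_unit); rewrite /= xam0 mul0r.
Qed.

Lemma fpf_cyc_mulr m q d (a : 'Z_q) :
  a \is a GRing.unit -> a ^+ m - 1 \is a GRing.unit ->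
  fpf_power_aut m (cyc_sum (nseq d q)).
Proof.
move=> a_unit am1_unit; have fpf0 := fpf_power_aut_trivial m.
have fpf1 : fpf_power_aut m (cyc_sum (nseq 1 q)).
  exact: fpf_power_aut_prod (fpf_power_aut_mulr a_unit am1_unit) fpf0.
by have := fpf_power_aut_nseq d (fpf0 : fpf_power_aut m (cyc_sum (nseq 0 q))) fpf1;
  rewrite add0n muln1.
Qed.

Lemma prime_pow_gt1 p r : prime p -> (0 < r)%N -> (1 < p ^ r)%N.
Proof. by move=> p_pr r_gt0; apply: leq_ltn_trans r_gt0 (ltn_expl r (prime_gt1 p_pr)). Qed.

Lemma Zp_prime_pow_unit p r l : prime p -> (0 < r)%N -> prime l -> p != l ->
  (l%:R : 'Z_(p ^ r)) \is a GRing.unit.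
Proof.
move=> p_pr r_gt0 l_pr p_l.
by rewrite unitZpE ?prime_pow_gt1 // coprime_pexpl // prime_coprime // dvdn_prime2.
Qed.

Lemma fpf_cyc_odd m p r d : odd m -> prime p -> p != 2%N -> (0 < r)%N ->
  fpf_power_aut m (cyc_sum (nseq d (p ^ r)%N)).
Proof.
move=> m_odd p_pr p_2 r_gt0; apply: (@fpf_cyc_mulr _ _ _ (-1)); first exact: unitrN1.
by rewrite -signr_odd m_odd expr1 -opprD unitrN; apply: (Zp_prime_pow_unit (l := 2)).
Qed.

Lemma fpf_cyc_coprime6 p r d : prime p -> p != 2%N -> p != 3%N -> (0 < r)%N ->
  fpf_power_aut 2 (cyc_sum (nseq d (p ^ r)%N)).
Proof.
move=> p_pr p_2 p_3 r_gt0; apply: (@fpf_cyc_mulr _ _ _ 2%:R).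
  exact: (Zp_prime_pow_unit (l := 2)).
have -> : (2%:R ^+ 2 - 1 : 'Z_(p ^ r)) = 3%:R by rewrite -natrX -(natrB _ (isT : 1 <= 4)%N).
exact: (Zp_prime_pow_unit (l := 3)).
Qed.

(** * Companion matrices over Z_(p^r) *)

Section CompanionAction.
Variable q : nat.
Local Notation V n := (cyc_sum (nseq n q)).

(* For cs = [:: c_0; ...; c_(n-1)], [companion cs] maps (x_0, ..., x_(n-1)) to
   (x_1 - c_0 x_0, ..., x_(n-1) - c_(n-2) x_0, - c_(n-1) x_0); its matrix is a
   companion matrix of X^n + c_0 X^(n-1) + ... + c_(n-1). *)
Fixpoint companion_tail n (cs : seq int) (y : 'Z_q) : V n -> V n.+1 :=
  match n return V n -> V n.+1 with
  | 0 => fun _ => (- (y *~ head 0 cs), 0)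
  | n'.+1 => fun x => (x.1 - y *~ head 0 cs, companion_tail (behead cs) y x.2)
  end.

Definition companion n (cs : seq int) : V n -> V n :=
  match n return V n -> V n with
  | 0 => id
  | n'.+1 => fun x => companion_tail cs x.1 x.2
  end.

Lemma companion_tailD n cs y1 y2 x1 x2 :
  companion_tail cs (y1 + y2) (x1 + x2 : V n) =
  companion_tail cs y1 x1 + companion_tail cs y2 x2.
Proof.
have mulrzD c : (y1 + y2) *~ c = y1 *~ c + y2 *~ c by exact: mulrzDl.
elim: n cs x1 x2 => [|n IH] cs x1 x2 /=.
  by congr pair; rewrite /= ?addr0 ?mulrzD ?opprD.
by congr pair; rewrite ?IH // mulrzD opprD addrACA.
Qed.

Lemma companionD n cs : {morph @companion n cs : x y / x + y}.
Proof. by case: n => [|n] //= x y; rewrite -companion_tailD. Qed.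

HB.instance Definition _ n cs := GRing.isNmodMorphism.Build (V n) (V n) (companion cs)
  (morphD_nmod_morphism (@companionD n cs)).

End CompanionAction.

Fixpoint map_cyc n q q' (f : 'Z_q -> 'Z_q') : cyc_sum (nseq n q) -> cyc_sum (nseq n q') :=
  match n return cyc_sum (nseq n q) -> cyc_sum (nseq n q') with
  | 0 => id
  | n'.+1 => fun x => (f x.1, map_cyc f x.2)
  end.

Section MapCyc.
Variables (q q' : nat) (f : {additive 'Z_q -> 'Z_q'}).

Lemma map_cycD n : {morph @map_cyc n _ _ f : x y / x + y}.
Proof. by elim: n => [|n IH] //= x y; rewrite raddfD IH. Qed.

HB.instance Definition _ n := GRing.isNmodMorphism.Build _ _ (@map_cyc n _ _ f)
  (morphD_nmod_morphism (@map_cycD n)).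

Lemma map_cyc_inj n : (forall c, f c = 0 -> c = 0) -> injective (@map_cyc n _ _ f).
Proof.
move=> f_ker; elim: n => [|n IH] //= [a x] [b y] /= [ab /IH ->].
by rewrite (raddf_ker0_inj f_ker ab).
Qed.

Lemma companion_tail_map n cs y x :
  map_cyc f (companion_tail cs y x) = companion_tail cs (f y) (@map_cyc n _ _ f x).
Proof.
elim: n cs x => [|n IH] cs x /=; first by rewrite raddfN raddfMz.
by congr pair; [rewrite raddfB raddfMz | exact: IH].
Qed.

Lemma companion_map n cs x :
  map_cyc f (@companion q n cs x) = companion cs (map_cyc f x).
Proof. by case: n x => [|n] x //; exact: companion_tail_map. Qed.

End MapCyc.

(* Unlike [enum], this enumeration reduces under [vm_compute]. *)
Fixpoint cyc_enum n q : seq (cyc_sum (nseq n q)) :=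
  match n return seq (cyc_sum (nseq n q)) with
  | 0 => [:: 0]
  | n'.+1 =>
    [seq (a, x) | a <- [seq inZp i | i <- iota 0 (Zp_trunc q).+2], x <- cyc_enum n' q]
  end.

Lemma all_cyc_enum n q (P : pred (cyc_sum (nseq n q))) :
  all P (cyc_enum n q) -> forall x, P x.
Proof.
move/allP=> allP x; apply: allP; elim: n x {P} => [|n IH] x.
  by rewrite /= inE (ord1 x).
case: x => a x; apply: allpairs_f; last exact: IH.
by apply/mapP; exists (val a); rewrite ?valZpK // mem_iota ltn_ord.
Qed.

Definition companion_fpf_check n p m cs :=
  all (fun c => ((companion cs c == 0) || (iter m (companion cs) c == c)) ==> (c == 0))
      (cyc_enum n p).

Lemma cyc_sum_mulrn_char n q (x : cyc_sum (nseq n q)) : (1 < q)%N -> x *+ q = 0.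
Proof.
move=> q_gt1; elim: n x => [|n IH] x /=; first by rewrite (ord1 x) mul0rn.
by rewrite pairMnE IH -mulr_natr pchar_Zp // mulr0.
Qed.

Lemma torsion_kernel (W W' : zmodType) (chi : {additive W -> W'}) p :
  (forall y, y *+ p = 0 -> chi y = 0 -> y = 0) ->
  forall k x, x *+ p ^ k = 0 -> chi x = 0 -> x = 0.
Proof.
move=> ker_p; elim=> [|k IH] x; first by rewrite expn0 mulr1n.
rewrite expnSr mulrnA => xpk chix; apply: (IH _ _ chix); apply: (ker_p _ xpk).
by rewrite raddfMn chix mul0rn.
Qed.

Lemma Zp_nat_eq0 q n : (1 < q)%N -> ((n%:R : 'Z_q) == 0) = (q %| n)%N.
Proof. by move=> q_gt1; rewrite -val_eqE /= val_Zp_nat. Qed.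

Section PrimePowerEmbedding.
Variables (p r : nat).
Hypotheses (p_pr : prime p) (r_gt0 : (0 < r)%N).

Let p_gt1 : (1 < p)%N := prime_gt1 p_pr.
Let pr_gt1 : (1 < p ^ r)%N := prime_pow_gt1 p_pr r_gt0.
Let prE : (p ^ r = p ^ r.-1 * p)%N.
Proof. by rewrite -expnSr prednK. Qed.

Definition Zp_pow_emb (c : 'Z_p) : 'Z_(p ^ r) := (p ^ r.-1 * c)%:R.

Fact Zp_pow_emb_is_nmod_morphism : nmod_morphism Zp_pow_emb.
Proof.
split=> [|a b]; first by rewrite /Zp_pow_emb muln0.
rewrite /Zp_pow_emb -natrD -mulnDr /=.
have -> : ((a + b) %% (Zp_trunc p).+2 = (a + b) %% p)%N by congr (_ %% _)%N; apply: Zp_cast.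
by rewrite muln_modr -prE Zp_nat_mod.
Qed.

HB.instance Definition _ :=
  GRing.isNmodMorphism.Build 'Z_p 'Z_(p ^ r) Zp_pow_emb Zp_pow_emb_is_nmod_morphism.

Lemma Zp_pow_emb_eq0 c : Zp_pow_emb c = 0 -> c = 0.
Proof.
move/eqP; rewrite Zp_nat_eq0 // prE dvdn_pmul2l ?expn_gt0 ?prime_gt0 // => p_c.
apply/val_inj/eqP; rewrite /= -leqn0 leqNgt; apply: contraL p_c => c_gt0.
by rewrite gtnNdvd // -{2}(Zp_cast p_gt1) ltn_ord.
Qed.

Lemma Zp_pow_torsion (y : 'Z_(p ^ r)) : y *+ p = 0 -> exists c, y = Zp_pow_emb c.
Proof.
rewrite -mulr_natr -{1}(natr_Zp y) -natrM => /eqP.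
rewrite Zp_nat_eq0 // [X in (X %| _)%N]prE dvdn_pmul2r ?prime_gt0 // => /dvdnP[c yE].
have y_lt : (y < p ^ r)%N by rewrite -[X in (_ < X)%N](Zp_cast pr_gt1).
have c_lt : (c < p)%N.
  by rewrite -(@ltn_pmul2r (p ^ r.-1)) ?expn_gt0 ?prime_gt0 // -yE [(p * _)%N]mulnC -prE.
exists (inZp c); rewrite /Zp_pow_emb /=.
have -> : (c %% (Zp_trunc p).+2 = c)%N by rewrite (Zp_cast p_gt1) modn_small.
by rewrite mulnC -yE natr_Zp.
Qed.

Lemma cyc_torsion n (y : cyc_sum (nseq n (p ^ r)%N)) :
  y *+ p = 0 -> exists c, y = map_cyc Zp_pow_emb c.
Proof.
elim: n y => [|n IH] y; first by exists 0; rewrite (ord1 y).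
case: y => a y; rewrite pairMnE => -[/Zp_pow_torsion[c ->] /IH[x ->]].
by exists (c, x).
Qed.

Lemma ker0_lift n (chi : {additive cyc_sum (nseq n (p ^ r)%N) -> cyc_sum (nseq n (p ^ r)%N)})
    (chi_p : cyc_sum (nseq n p) -> cyc_sum (nseq n p)) :
  (forall c, map_cyc Zp_pow_emb (chi_p c) = chi (map_cyc Zp_pow_emb c)) ->
  (forall c, chi_p c = 0 -> c = 0) -> forall x, chi x = 0 -> x = 0.
Proof.
move=> chiE chi_p_ker x; apply: torsion_kernel (cyc_sum_mulrn_char x pr_gt1) => y.
case/cyc_torsion=> c ->; rewrite -chiE -(raddf0 (map_cyc Zp_pow_emb)).
by move/(map_cyc_inj Zp_pow_emb_eq0)/chi_p_ker->.
Qed.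

Lemma fpf_companion n m cs :
  companion_fpf_check n p m cs -> fpf_power_aut m (cyc_sum (nseq n (p ^ r)%N)).
Proof.
move/all_cyc_enum=> fpf_p.
have iter_map j (c : cyc_sum (nseq n p)) : map_cyc Zp_pow_emb (iter j (companion cs) c) =
                    iter j (companion cs) (map_cyc Zp_pow_emb c).
  by elim: j => //= j <-; rewrite companion_map.
exists (companion cs); split; first exact: companionD.
  apply: (ker0_lift (chi_p := companion cs)) => [c | c c0]; first exact: companion_map.
  by apply/eqP; move/implyP: (fpf_p c); rewrite c0 eqxx; apply.
move=> x fix_x; apply: (ker0_lift (chi := iter m (companion cs) \- idfun)
                                  (chi_p := fun c => iter m (companion cs) c - c)).
- by move=> c /=; rewrite -iter_map raddfB.
- move=> c /eqP; rewrite subr_eq0 => c_fix.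
  by apply/eqP; move/implyP: (fpf_p c); rewrite c_fix orbT; apply.
- by rewrite /= fix_x subrr.
Qed.

End PrimePowerEmbedding.

(* X^2 + 3X + 1 reduces to X^2 + X + 1 mod 2 (roots of order 3) and to X^2 + 1
   mod 3 (roots of order 4). *)
Lemma fpf_cyc2 p r m : (0 < r)%N -> (p, m) \in [:: (2, 2); (2, 5); (2, 35); (3, 2)]%N ->
  fpf_power_aut m (cyc_sum (nseq 2 (p ^ r)%N)).
Proof.
move=> r_gt0; rewrite !inE => /or4P[] /eqP[-> ->];
  by apply: (@fpf_companion _ _ _ r_gt0 _ _ [:: 3; 1]); vm_compute.
Qed.

(* X^3 - X - 1: its roots have order 7 over F_2 and 13 over F_3. *)
Lemma fpf_cyc3 p r m : (0 < r)%N -> (p, m) \in [:: (2, 2); (2, 3); (2, 5); (3, 2)]%N ->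
  fpf_power_aut m (cyc_sum (nseq 3 (p ^ r)%N)).
Proof.
move=> r_gt0; rewrite !inE => /or4P[] /eqP[-> ->];
  by apply: (@fpf_companion _ _ _ r_gt0 _ _ [:: 0; -1; -1]); vm_compute.
Qed.

(* The 5th cyclotomic polynomial: its roots have order 5 over F_2. *)
Lemma fpf_cyc4 r : (0 < r)%N -> fpf_power_aut 3 (cyc_sum (nseq 4 (2 ^ r)%N)).
Proof. by move=> r_gt0; apply: (@fpf_companion _ _ _ r_gt0 _ _ [:: 1; 1; 1; 1]); vm_compute. Qed.

(* X^5 + X^2 + 1, whose roots have order 31 over F_2. *)
Lemma fpf_cyc5 r m : (0 < r)%N -> m \in [:: 3; 35]%N ->
  fpf_power_aut m (cyc_sum (nseq 5 (2 ^ r)%N)).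
Proof.
move=> r_gt0; rewrite !inE => /orP[] /eqP->;
  by apply: (@fpf_companion _ _ _ r_gt0 _ _ [:: 0; 0; 1; 0; 1]); vm_compute.
Qed.

Section FpfMultiplicities.
Variables (m q : nat).
Local Notation D d := (fpf_power_aut m (cyc_sum (nseq d q))).

Lemma fpf_nseq_ge2 d : D 2 -> D 3 -> (2 <= d)%N -> D d.
Proof.
move=> D2 D3 d_ge2; case/boolP: (odd d) => d_odd.
  have -> : d = (3 + (d - 3) %/ 2 * 2)%N by lia.
  exact: fpf_power_aut_nseq.
have -> : d = (2 + (d - 2) %/ 2 * 2)%N by lia.
exact: fpf_power_aut_nseq.
Qed.

Lemma fpf_nseq_ge3 d : D 3 -> D 4 -> D 5 -> (3 <= d)%N -> D d.
Proof.
move=> D3 D4 D5 d_ge3; have : (d %% 3 = 0 \/ d %% 3 = 1 \/ d %% 3 = 2)%N by lia.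
case=> [d0 | [d1 | d2]].
- have -> : d = (3 + (d - 3) %/ 3 * 3)%N by lia.
  exact: fpf_power_aut_nseq.
- have -> : d = (4 + (d - 4) %/ 3 * 3)%N by lia.
  exact: fpf_power_aut_nseq.
- have -> : d = (5 + (d - 5) %/ 3 * 3)%N by lia.
  exact: fpf_power_aut_nseq.
Qed.

Lemma fpf_nseq_ge2_neq3 d : D 2 -> D 5 -> (2 <= d)%N -> d != 3%N -> D d.
Proof.
move=> D2 D5 d_ge2 d_3; case/boolP: (odd d) => d_odd.
  have -> : d = (5 + (d - 5) %/ 2 * 2)%N by lia.
  exact: fpf_power_aut_nseq.
have -> : d = (2 + (d - 2) %/ 2 * 2)%N by lia.
exact: fpf_power_aut_nseq.
Qed.

End FpfMultiplicities.

Lemma fpf_entry_m2 p r d : (p = 2%N \/ p = 3%N -> (2 <= d)%N) -> prime p -> (0 < r)%N ->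
  fpf_power_aut 2 (cyc_sum (nseq d (p ^ r)%N)).
Proof.
move=> d_ge2 p_pr r_gt0; case: (p =P 2%N) => [p_2 | /eqP p_2].
  rewrite p_2; apply: (fpf_nseq_ge2 _ _ (d_ge2 (or_introl p_2))).
    exact: fpf_cyc2.
  exact: fpf_cyc3.
case: (p =P 3%N) => [p_3 | /eqP p_3]; last exact: fpf_cyc_coprime6.
rewrite p_3; apply: (fpf_nseq_ge2 _ _ (d_ge2 (or_intror p_3))).
  exact: fpf_cyc2.
exact: fpf_cyc3.
Qed.

Lemma fpf_entry_odd m p r d : odd m -> prime p -> (0 < r)%N ->
  (p = 2%N -> fpf_power_aut m (cyc_sum (nseq d (2 ^ r)%N))) ->
  fpf_power_aut m (cyc_sum (nseq d (p ^ r)%N)).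
Proof.
move=> m_odd p_pr r_gt0 fpf2; case: (p =P 2%N) => [p_2 | /eqP p_2].
  by rewrite p_2 in fpf2 *; apply: fpf2.
exact: fpf_cyc_odd.
Qed.

Lemma fpf_entry_m3 p r d : (p = 2%N -> (3 <= d)%N) -> prime p -> (0 < r)%N ->
  fpf_power_aut 3 (cyc_sum (nseq d (p ^ r)%N)).
Proof.
move=> d3 p_pr r_gt0; apply: fpf_entry_odd => // /d3.
by apply: fpf_nseq_ge3; [apply: fpf_cyc3 | apply: fpf_cyc4 | apply: fpf_cyc5].
Qed.

Lemma fpf_entry_m5 p r d : (p = 2%N -> (2 <= d)%N) -> prime p -> (0 < r)%N ->
  fpf_power_aut 5 (cyc_sum (nseq d (p ^ r)%N)).
Proof.
move=> d2 p_pr r_gt0; apply: fpf_entry_odd => // /d2.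
by apply: fpf_nseq_ge2; [apply: fpf_cyc2 | apply: fpf_cyc3].
Qed.

Lemma fpf_entry_m35 p r d : (p = 2%N -> (2 <= d)%N /\ d <> 3%N) -> prime p -> (0 < r)%N ->
  fpf_power_aut 35 (cyc_sum (nseq d (p ^ r)%N)).
Proof.
move=> d23 p_pr r_gt0; apply: fpf_entry_odd => // /d23[d2 /eqP d3].
by apply: fpf_nseq_ge2_neq3 => //; [apply: fpf_cyc2 | apply: fpf_cyc5].
Qed.

Lemma wr_finite_reidemeister (G : finZmodType) k m s :
  (0 < m)%N -> has_geomsum0_mx int m k -> has_pdec G s ->
  (forall p r d, (p, r, d) \in s -> fpf_power_aut m (cyc_sum (nseq d (p ^ r)%N))) ->
  exists phi : wr G k -> wr G k, wr_automorphism phi /\ finite_reidemeister phi.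
Proof.
move=> m_gt0 [M sumM0] hG fpf_s.
have [psi [psiD psi_ker psi_fpf]] := fpf_power_aut_pdec hG fpf_s.
exists (wr_twist m M psi); split.
  exact: wr_twist_automorphism.
exact: wr_twist_finite_reidemeister.
Qed.

Theorem theorem1 (k : nat) (G : finZmodType) (s : seq (nat * nat * nat)) :
  (1 <= k)%N ->
  pdec_wf s ->
  has_pdec G s ->
  ((forall p r d, (p, r, d) \in s -> p = 2%N \/ p = 3%N -> (2 <= d)%N) \/
      ((forall p r d, (p, r, d) \in s -> p <> 2%N) /\ ~~ odd k) \/
      ((forall p r d, (p, r, d) \in s -> p = 2%N -> (2 <= d)%N) /\ (4 %| k)%N) \/
      ((forall p r d, (p, r, d) \in s -> p = 2%N -> (3 <= d)%N) /\ ~~ odd k)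
    \/ ((forall p r d, (p, r, d) \in s -> p = 2%N -> (2 <= d)%N /\ d <> 3%N)
        /\ ~~ odd k /\ (4 <= k)%N)) ->
  exists phi : wr G k -> wr G k,
    wr_automorphism phi /\ finite_reidemeister phi.
Proof.
(* The construction does not need k >= 1. *)
move=> _ [wf _] hG cond.
suff criterion m : (0 < m)%N -> has_geomsum0_mx int m k ->
    (forall p r d, (p, r, d) \in s -> prime p -> (0 < r)%N ->
       fpf_power_aut m (cyc_sum (nseq d (p ^ r)%N))) ->
    exists phi : wr G k -> wr G k, wr_automorphism phi /\ finite_reidemeister phi.
  case: cond => [c | [[c k_even] | [[c k_4] | [[c k_even] | [c [k_even k_ge4]]]]]].
  - by apply: criterion (has_geomsum0_mx2 _ k) _ => // p r d /c; apply: fpf_entry_m2.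
  - apply: criterion (has_geomsum0_mx3 _ k_even) _ => // p r d /c p_2 p_pr r_gt0.
    exact: fpf_cyc_odd (introN eqP p_2) r_gt0.
  - by apply: criterion (has_geomsum0_mx5 _ k_4) _ => // p r d /c; apply: fpf_entry_m5.
  - by apply: criterion (has_geomsum0_mx3 _ k_even) _ => // p r d /c; apply: fpf_entry_m3.
  - case/boolP: (4 %| k)%N => [k_4 | k_n4].
      apply: criterion (has_geomsum0_mx5 _ k_4) _ => // p r d /c d23.
      by apply: fpf_entry_m5 => /d23[].
    apply: criterion (has_geomsum0_mx35 _ k_even k_n4 k_ge4) _ => // p r d /c.
    exact: fpf_entry_m35.
move=> m_gt0 Mk fpf_s; apply: wr_finite_reidemeister m_gt0 Mk hG _ => p r d t_s.
by have [p_pr r_gt0 _] := wf p r d t_s; apply: fpf_s.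
Qed.
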